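(* For any frame $L$, $\mathrm{F}(L)=\mathrm{C}(\mathrm{coS}(L))$ if and only if $\mathrm{coS}(L)$ is an extremally disconnected P-frame.
   Context: $\mathbb{Q}$ is the rationals. A sublocale of $L$ is a subset closed under arbitrary meets and such that $x\to s\in S$ for $x\in L$, $s\in S$; $\mathrm{coS}(L)$ is the frame of sublocales ordered by reverse inclusion, with pseudocomplement $^\ast$. The frame $\mathfrak{L}(\overline{\mathbb{IR}})$ is presented by generators $(r,\textsf{---})$, $(\textsf{---},s)$ ($r,s\in\mathbb{Q}$) with relations (r1) $(r,\textsf{---})\wedge(\textsf{---},s)=0$ for $r\ge s$; (r3) $(r,\textsf{---})=\bigvee_{s>r}(s,\textsf{---})$; (r4) $(\textsf{---},s)=\bigvee_{r<s}(\textsf{---},r)$. For a frame $M$, $\mathrm{C}(M)$ is the set of frame homomorphisms $f\colon\mathfrak{L}(\overline{\mathbb{IR}})\to M$ satisfying (r2) $f(r,\textsf{---})\vee f(\textsf{---},s)=1$ for $r<s$, (r5) $\bigvee_r f(r,\textsf{---})=1$, (r6) $\bigvee_s f(\textsf{---},s)=1$ (i.e. continuous real functions on $M$). $\overline{\mathrm{F}}(L)$ is the set of homomorphisms $f\colon\mathfrak{L}(\overline{\mathbb{IR}})\to\mathrm{coS}(L)$ with $f(r,\textsf{---})^\ast\le f(\textsf{---},s)$ and $f(\textsf{---},s)^\ast\le f(r,\textsf{---})$ for $r<s$, ordered by $f\le g$ iff $f(r,\textsf{---})\le g(r,\textsf{---})$ and $g(\textsf{---},s)\le f(\textsf{---},s)$;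 it is a complete lattice with top $\boldsymbol{+\infty}$ ($(r,\textsf{---})\mapsto1$, $(\textsf{---},s)\mapsto0$) and bottom $\boldsymbol{-\infty}$ ($(r,\textsf{---})\mapsto0$, $(\textsf{---},s)\mapsto1$). $\mathrm{F}(L)$ is the set of $f\in\overline{\mathrm{F}}(L)$ such that for all $g\in\overline{\mathrm{F}}(L)$, $f\vee g=\boldsymbol{+\infty}\Rightarrow g=\boldsymbol{+\infty}$ and $f\wedge g=\boldsymbol{-\infty}\Rightarrow g=\boldsymbol{-\infty}$; note $\mathrm{C}(\mathrm{coS}(L))\subseteq\overline{\mathrm{F}}(L)$. A frame $M$ is extremally disconnected if $a^\ast\vee a^{\ast\ast}=1$ for all $a$; an element $a\in M$ is a cozero if $a=f(\textsf{---},0)\vee f(0,\textsf{---})$ for some $f\in\mathrm{C}(M)$; $M$ is a P-frame if every cozero element is complemented. *)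

From Stdlib Require Import ClassicalEpsilon.
From mathcomp Require Import all_boot all_order all_algebra.
Set Implicit Arguments. Unset Strict Implicit. Unset Printing Implicit Defensive.
Import Order.TTheory GRing.Theory Num.Theory.

(* The point [pt] is only used to make the (classical) choice of       *)
(* suprema/infima well-typed; when a supremum exists, [sup] returns it. *)
Record poset := Poset { car :> Type; le : car -> car -> Prop; pt : car }.
Arguments le {p}.

Section Ops.
Variable M : poset.

Definition is_ub (P : M -> Prop) (x : M) := forall y, P y -> le y x.
Definition is_lb (P : M -> Prop) (x : M) := forall y, P y -> le x y.
Definition is_sup (P : M -> Prop) (x : M) :=
  is_ub P x /\ forall z, is_ub P z -> le x z.
Definition is_inf (P : M -> Prop) (x : M) :=
  is_lb P x /\ forall z, is_lb P z -> le z x.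

Definition sup (P : M -> Prop) : M := epsilon (inhabits (pt M)) (is_sup P).
Definition inf (P : M -> Prop) : M := epsilon (inhabits (pt M)) (is_inf P).
Definition top : M := sup (fun _ => True).
Definition bot : M := sup (fun _ => False).
Definition meet (a b : M) : M := inf (fun y => y = a \/ y = b).
Definition join (a b : M) : M := sup (fun y => y = a \/ y = b).
Definition imp (a b : M) : M := sup (fun y => le (meet y a) b).
Definition pc (a : M) : M := sup (fun b => meet a b = bot).

Definition is_frame : Prop :=
  [/\ (forall x : M, le x x),
      (forall x y z : M, le x y -> le y z -> le x z),
      (forall x y : M, le x y -> le y x -> x = y),
      (forall P : M -> Prop, exists x, is_sup P x)
    & (forall (a : M) (P : M -> Prop),
         meet a (sup P) = sup (fun y => exists p, P p /\ y = meet a p))].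

End Ops.

Definition sublocale (L : poset) (S : L -> Prop) : Prop :=
  (forall A : L -> Prop, (forall a, A a -> S a) -> S (inf A)) /\
  (forall (x s : L), S s -> S (imp x s)).

Lemma sublocale_full (L : poset) : sublocale (fun _ : L => True).
Proof. by split. Qed.

Definition coS (L : poset) : poset :=
  {| car := {S : L -> Prop | sublocale S};
     le := fun S T => forall x, proj1_sig T x -> proj1_sig S x;
     pt := exist _ (fun _ : L => True) (sublocale_full L) |}.

(* Frame homomorphisms  L(IR-bar) -> M.  By the universal property of   *)
(* the presentation, such a homomorphism is the same thing as an        *)
(* assignment of the generators (r,-) |-> lo r and (-,s) |-> hi s       *)
(* satisfying the relations (r1), (r3), (r4) in M.                      *)
Record rmap (M : poset) := RMap { lo : rat -> M; hi : rat -> M }.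

Local Open Scope ring_scope.

Definition is_hom (M : poset) (f : rmap M) : Prop :=
  [/\ (forall r s : rat, s <= r -> meet (lo f r) (hi f s) = bot M),       (* r1 *)
      (forall r : rat, lo f r = sup (fun y => exists s, r < s /\ y = lo f s)) (* r3 *)
    & (forall s : rat, hi f s = sup (fun y => exists r, r < s /\ y = hi f r))]. (* r4 *)

Definition inC (M : poset) (f : rmap M) : Prop :=
  [/\ is_hom f,
      (forall r s : rat, r < s -> join (lo f r) (hi f s) = top M),            (* r2 *)
      sup (fun y => exists r, y = lo f r) = top M                             (* r5 *)
    & sup (fun y => exists s, y = hi f s) = top M].                           (* r6 *)

Definition inFbar (L : poset) (f : rmap (coS L)) : Prop :=
  is_hom f /\
  (forall r s : rat, r < s ->
     le (pc (lo f r)) (hi f s) /\ le (pc (hi f s)) (lo f r)).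

Definition Fle (L : poset) (f g : rmap (coS L)) : Prop :=
  (forall r, le (lo f r) (lo g r)) /\ (forall s, le (hi g s) (hi f s)).

Definition plus_inf (L : poset) : rmap (coS L) :=
  RMap (fun _ => top (coS L)) (fun _ => bot (coS L)).
Definition minus_inf (L : poset) : rmap (coS L) :=
  RMap (fun _ => bot (coS L)) (fun _ => top (coS L)).

Definition Fbar_is_join (L : poset) (f g h : rmap (coS L)) : Prop :=
  [/\ inFbar h, Fle f h, Fle g h &
      forall k, inFbar k -> Fle f k -> Fle g k -> Fle h k].
Definition Fbar_is_meet (L : poset) (f g h : rmap (coS L)) : Prop :=
  [/\ inFbar h, Fle h f, Fle h g &
      forall k, inFbar k -> Fle k f -> Fle k g -> Fle k h].

Definition inF (L : poset) (f : rmap (coS L)) : Prop :=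
  inFbar f /\
  forall g, inFbar g ->
    (Fbar_is_join f g (plus_inf L) -> g = plus_inf L) /\
    (Fbar_is_meet f g (minus_inf L) -> g = minus_inf L).

Definition extremally_disconnected (M : poset) : Prop :=
  forall a : M, join (pc a) (pc (pc a)) = top M.

Definition cozero (M : poset) (a : M) : Prop :=
  exists f : rmap M, inC f /\ a = join (hi f 0) (lo f 0).

Definition complemented (M : poset) (a : M) : Prop :=
  exists b : M, meet a b = bot M /\ join a b = top M.

Definition P_frame (M : poset) : Prop :=
  forall a : M, cozero a -> complemented a.

(* Every continuous f lies in F: if f \/ g = +oo in bar F, then the function
   with (-,s) |-> f(-,s) /\ g(-,s) lies above f \/ g, so these meets vanish;
   as the f(-,s) have dense join, all g(-,s) are 0 and g = +oo.  Dually for -oo.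

   If F = C, then the step function that is 1 on a** and 0 on a* lies in F
   (its joins contain 1), and (r2) for it reads a* \/ a** = 1.  For continuous
   f, the function equal to 1/f on (f > 0)** and to 0 on (f > 0)* lies in F;
   (r6) for it says that (f > 0) is complemented, and so is (f < 0) by the
   symmetry f |-> -f, hence so is every cozero element f(-,0) \/ f(0,-), a
   disjoint join of the two.

   Conversely, in an extremally disconnected frame (r2) holds for every
   element of bar F, since a*, a** are complementary.  For f in F the element
   a := \/_s f(-,s) is dense: the function that is +oo on a** and -oo on a*
   joins f to +oo.  But a is the cozero element of 1/(1 + max f 0), so in a
   P-frame it is complemented, hence a = 1, which is (r6); (r5) follows by
   symmetry.  The theorem applies this to M = coS(L), which is a frame: its
   joins are intersections and its binary meets are pointwise meets. *)

From mathcomp Require Import all_boot all_order all_algebra lra.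
From Stdlib Require Import ClassicalEpsilon FunctionalExtensionality.
From Stdlib Require Import PropExtensionality ProofIrrelevance.
Set Implicit Arguments. Unset Strict Implicit. Unset Printing Implicit Defensive.
Import Order.TTheory GRing.Theory Num.Theory.
Local Open Scope ring_scope.

Lemma ltV_pos (r s : rat) : 0 < r -> 0 < s -> r < s -> s^-1 < r^-1.
Proof. by move=> r0 s0 rs; rewrite ltf_pV2 ?posrE. Qed.

Lemma leV_pos (r s : rat) : 0 < r -> 0 < s -> r <= s -> s^-1 <= r^-1.
Proof. by move=> r0 s0 rs; rewrite lef_pV2 ?posrE. Qed.

Lemma sup_of_is_sup (N : poset) (P : N -> Prop) x :
  (forall y z : N, le y z -> le z y -> y = z) -> is_sup P x -> sup P = x.
Proof.
move=> anti supx; have [ub lub] : is_sup P (sup P) by apply: epsilon_spec; exists x.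
by apply: anti; [apply: lub; case: supx | apply: supx.2 ub].
Qed.

Lemma inf_of_is_inf (N : poset) (P : N -> Prop) x :
  (forall y z : N, le y z -> le z y -> y = z) -> is_inf P x -> inf P = x.
Proof.
move=> anti infx; have [lb glb] : is_inf P (inf P) by apply: epsilon_spec; exists x.
by apply: anti; [apply: infx.2 lb | apply: glb; case: infx].
Qed.

Section Frame.
Variable M : poset.
Hypothesis HM : is_frame M.

(** * Frames and pseudocomplements *)

Lemma fle_refl (x : M) : le x x.
Proof. by case: HM. Qed.

Lemma fle_trans (x y z : M) : le x y -> le y z -> le x z.
Proof. by case: HM => _ + _ _ _; apply. Qed.

Lemma fle_anti (x y : M) : le x y -> le y x -> x = y.
Proof. by case: HM => _ _ + _ _; apply. Qed.

Lemma sup_spec (P : M -> Prop) : is_sup P (sup P).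
Proof. by apply: epsilon_spec; case: HM => _ _ _ + _; apply. Qed.

Lemma sup_ub (P : M -> Prop) y : P y -> le y (sup P).
Proof. by move=> Py; apply: (sup_spec P).1. Qed.

Lemma sup_lub (P : M -> Prop) z : (forall y, P y -> le y z) -> le (sup P) z.
Proof. exact: (sup_spec P).2. Qed.

Lemma sup_eq (P : M -> Prop) x : P x -> (forall y, P y -> le y x) -> sup P = x.
Proof. by move=> Px ub; apply: fle_anti; [apply: sup_lub | apply: sup_ub]. Qed.

Lemma sup_ext (P Q : M -> Prop) : (forall y, P y <-> Q y) -> sup P = sup Q.
Proof. by move=> PQ; apply: fle_anti; apply: sup_lub => y /PQ; apply: sup_ub. Qed.

Lemma inf_spec (P : M -> Prop) : is_inf P (inf P).
Proof.
apply: epsilon_spec; exists (sup (is_lb P)); split.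
- by move=> y Py; apply: sup_lub => z; apply.
- by move=> z; apply: sup_ub.
Qed.

Lemma inf_lb (P : M -> Prop) y : P y -> le (inf P) y.
Proof. by move=> Py; apply: (inf_spec P).1. Qed.

Lemma inf_glb (P : M -> Prop) z : (forall y, P y -> le z y) -> le z (inf P).
Proof. exact: (inf_spec P).2. Qed.

Lemma le_top (x : M) : le x (top M).
Proof. exact: sup_ub. Qed.

Lemma bot_le (x : M) : le (bot M) x.
Proof. by apply: sup_lub. Qed.

Lemma le_bot_eq (x : M) : le x (bot M) -> x = bot M.
Proof. by move=> x0; apply: fle_anti x0 (bot_le x). Qed.

Lemma top_le_eq (x : M) : le (top M) x -> x = top M.
Proof. exact: fle_anti (le_top x). Qed.

Lemma meet_l (a b : M) : le (meet a b) a.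
Proof. by apply: inf_lb; left. Qed.

Lemma meet_r (a b : M) : le (meet a b) b.
Proof. by apply: inf_lb; right. Qed.

Lemma meet_glb (a b c : M) : le c a -> le c b -> le c (meet a b).
Proof. by move=> ca cb; apply: inf_glb => y [->|->]. Qed.

Lemma join_l (a b : M) : le a (join a b).
Proof. by apply: sup_ub; left. Qed.

Lemma join_r (a b : M) : le b (join a b).
Proof. by apply: sup_ub; right. Qed.

Lemma join_lub (a b c : M) : le a c -> le b c -> le (join a b) c.
Proof. by move=> ac bc; apply: sup_lub => y [->|->]. Qed.

Lemma meetC (a b : M) : meet a b = meet b a.
Proof. by apply: fle_anti; apply: meet_glb; apply: meet_r || apply: meet_l. Qed.

Lemma joinC (a b : M) : join a b = join b a.
Proof. by apply: fle_anti; apply: join_lub; apply: join_r || apply: join_l. Qed.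

Lemma meet_mono (a b a' b' : M) : le a a' -> le b b' -> le (meet a b) (meet a' b').
Proof.
move=> aa' bb'; apply: meet_glb.
  by apply: fle_trans aa'; apply: meet_l.
by apply: fle_trans bb'; apply: meet_r.
Qed.

Lemma join_mono (a b a' b' : M) : le a a' -> le b b' -> le (join a b) (join a' b').
Proof.
move=> aa' bb'; apply: join_lub.
  by apply: fle_trans aa' _; apply: join_l.
by apply: fle_trans bb' _; apply: join_r.
Qed.

Lemma meet_topl (x : M) : meet (top M) x = x.
Proof. by apply: fle_anti (meet_r _ _) (meet_glb (le_top _) (fle_refl _)). Qed.

Lemma meet_topr (x : M) : meet x (top M) = x.
Proof. by rewrite meetC meet_topl. Qed.

Lemma meet_sup_le (a : M) (P : M -> Prop) z :
  (forall p, P p -> le (meet a p) z) -> le (meet a (sup P)) z.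
Proof.
case: HM => _ _ _ _ distr ub; rewrite distr.
by apply: sup_lub => _ [p [Pp ->]]; apply: ub.
Qed.

Lemma meet_join_le (a b c z : M) :
  le (meet a b) z -> le (meet a c) z -> le (meet a (join b c)) z.
Proof. by move=> ab ac; apply: meet_sup_le => p [->|->]. Qed.

Lemma meet_pc (a : M) : le (meet a (pc a)) (bot M).
Proof. by apply: meet_sup_le => p ->; apply: fle_refl. Qed.

Lemma le_pc (a b : M) : le (meet a b) (bot M) -> le b (pc a).
Proof. by move=> ab; apply: sup_ub; apply: le_bot_eq. Qed.

Lemma pc_sym (a b : M) : le b (pc a) -> le a (pc b).
Proof.
move=> b_pca; apply: le_pc; rewrite meetC; apply: fle_trans (meet_pc a).
by apply: meet_mono; [apply: fle_refl | ].
Qed.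

Lemma pc_anti (a b : M) : le a b -> le (pc b) (pc a).
Proof.
move=> ab; apply: le_pc; apply: fle_trans (meet_pc b).
by apply: meet_mono; [ | apply: fle_refl].
Qed.

Lemma le_pcpc (a : M) : le a (pc (pc a)).
Proof. by apply: pc_sym; apply: fle_refl. Qed.

Lemma pc3 (a : M) : pc (pc (pc a)) = pc a.
Proof. by apply: fle_anti; [apply: pc_anti; apply: le_pcpc | apply: le_pcpc]. Qed.

Lemma pc_top : pc (top M) = bot M.
Proof. by apply: le_bot_eq; rewrite -(meet_topl (pc (top M))); apply: meet_pc. Qed.

Lemma pc_bot : pc (bot M) = top M.
Proof. by apply: top_le_eq; apply: le_pc; apply: meet_l. Qed.

Lemma pc_le_of_join_top (a b : M) : join a b = top M -> le (pc a) b.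
Proof.
move=> ab; rewrite -(meet_topr (pc a)) -ab; apply: meet_join_le; last by apply: meet_r.
by rewrite meetC; apply: fle_trans (meet_pc a) (bot_le _).
Qed.

Definition dense (d : M) : Prop := forall y, le (meet y d) (bot M) -> le y (bot M).

Lemma dense_top : dense (top M).
Proof. by move=> y; rewrite meet_topr. Qed.

Lemma dense_sup (P : M -> Prop) : P (top M) -> dense (sup P).
Proof. by move=> Ptop; rewrite (sup_eq Ptop (fun y _ => le_top y)); apply: dense_top. Qed.

Lemma dense_join_pc (a : M) : dense (join a (pc a)).
Proof.
move=> y ya0; apply: fle_trans (meet_pc (pc a)); apply: meet_glb.
- by apply: le_pc; apply: fle_trans ya0; rewrite meetC; apply: meet_mono (fle_refl _) (join_l _ _).
- by apply: le_pc; apply: fle_trans ya0; rewrite meetC; apply: meet_mono (fle_refl _) (join_r _ _).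
Qed.

Lemma complemented_join (p q : M) : le (meet p q) (bot M) ->
  complemented p -> complemented q -> complemented (join p q).
Proof.
move=> pq [p' [pp' pp'1]] [q' [qq' qq'1]]; exists (meet p' q'); split.
- apply: le_bot_eq; rewrite meetC; apply: meet_join_le.
  + rewrite -pp'; apply: meet_glb; [apply: meet_r | apply: fle_trans (meet_l _ _) (meet_l _ _)].
  + rewrite -qq'; apply: meet_glb; [apply: meet_r | apply: fle_trans (meet_l _ _) (meet_r _ _)].
- apply: top_le_eq; rewrite -(meet_topl (top M)) -{1}pp'1 -qq'1.
  apply: meet_join_le.
  + by apply: fle_trans (meet_r _ _) _; apply: fle_trans (join_r p q) (join_l _ _).
  + rewrite meetC; apply: meet_join_le.
    * by apply: fle_trans (meet_r _ _) _; apply: fle_trans (join_l p q) (join_l _ _).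
    * by apply: fle_trans _ (join_r _ _); apply: meet_glb; [apply: meet_r | apply: meet_l].
Qed.

(** * Extended real functions on a frame *)

Lemma le_sup_gt (l : rat -> M) r s x : r < s -> le x (l s) ->
  le x (sup (fun y => exists t, r < t /\ y = l t)).
Proof. by move=> rs xl; apply: fle_trans xl _; apply: sup_ub; exists s. Qed.

Lemma le_sup_lt (h : rat -> M) s r x : r < s -> le x (h r) ->
  le x (sup (fun y => exists t, t < s /\ y = h t)).
Proof. by move=> rs xh; apply: fle_trans xh _; apply: sup_ub; exists r. Qed.

Lemma sup_gt_eq (l : rat -> M) r :
  (forall s, r < s -> le (l s) (l r)) ->
  le (l r) (sup (fun y => exists s, r < s /\ y = l s)) ->
  l r = sup (fun y => exists s, r < s /\ y = l s).
Proof. by move=> anti ub; apply: fle_anti ub _; apply: sup_lub => _ [s [rs ->]]; apply: anti. Qed.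

Lemma sup_lt_eq (h : rat -> M) s :
  (forall r, r < s -> le (h r) (h s)) ->
  le (h s) (sup (fun y => exists r, r < s /\ y = h r)) ->
  h s = sup (fun y => exists r, r < s /\ y = h r).
Proof. by move=> mono ub; apply: fle_anti ub _; apply: sup_lub => _ [r [rs ->]]; apply: mono. Qed.

Lemma sup_lt_mono (h : rat -> M) :
  (forall s, h s = sup (fun y => exists r, r < s /\ y = h r)) ->
  forall s t, s <= t -> le (h s) (h t).
Proof.
move=> hE s t; rewrite le_eqVlt => /predU1P [-> | st]; first exact: fle_refl.
by rewrite (hE t); apply: le_sup_lt st (fle_refl _).
Qed.

Lemma sup_gt_anti (l : rat -> M) :
  (forall r, l r = sup (fun y => exists s, r < s /\ y = l s)) ->
  forall r s, r <= s -> le (l s) (l r).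
Proof.
move=> lE r s; rewrite le_eqVlt => /predU1P [-> | rs]; first exact: fle_refl.
by rewrite (lE r); apply: le_sup_gt rs (fle_refl _).
Qed.

Lemma hi_mono (f : rmap M) s t : is_hom f -> s <= t -> le (hi f s) (hi f t).
Proof. by case=> _ _ hE; apply: sup_lt_mono. Qed.

Lemma lo_anti (f : rmap M) r s : is_hom f -> r <= s -> le (lo f s) (lo f r).
Proof. by case=> _ lE _; apply: sup_gt_anti. Qed.

Lemma hom_lo_hi_disj (f : rmap M) r s : is_hom f -> s <= r ->
  le (meet (lo f r) (hi f s)) (bot M).
Proof. by case=> disj _ _ sr; rewrite disj //; apply: fle_refl. Qed.

Lemma hom_lo_pc (f : rmap M) r s : is_hom f -> s <= r -> le (lo f r) (pc (hi f s)).
Proof. by move=> Hf sr; apply: le_pc; rewrite meetC; apply: hom_lo_hi_disj. Qed.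

Lemma hom_hi_pc (f : rmap M) r s : is_hom f -> s <= r -> le (hi f s) (pc (lo f r)).
Proof. by move=> Hf sr; apply: le_pc; apply: hom_lo_hi_disj. Qed.

Definition sup_lo (f : rmap M) : M := sup (fun y => exists r, y = lo f r).
Definition sup_hi (f : rmap M) : M := sup (fun y => exists s, y = hi f s).

(** For [M := coS L] the next seven definitions unfold to [inFbar], [Fle],
    [plus_inf], [minus_inf], [Fbar_is_join], [Fbar_is_meet] and [inF]. *)
Definition inFbarM (f : rmap M) : Prop :=
  is_hom f /\
  forall r s, r < s -> le (pc (lo f r)) (hi f s) /\ le (pc (hi f s)) (lo f r).

Definition FleM (f g : rmap M) : Prop :=
  (forall r, le (lo f r) (lo g r)) /\ (forall s, le (hi g s) (hi f s)).

Definition plus_infM : rmap M := RMap (fun _ => top M) (fun _ => bot M).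
Definition minus_infM : rmap M := RMap (fun _ => bot M) (fun _ => top M).

Definition is_joinM (f g h : rmap M) : Prop :=
  [/\ inFbarM h, FleM f h, FleM g h &
      forall k, inFbarM k -> FleM f k -> FleM g k -> FleM h k].

Definition is_meetM (f g h : rmap M) : Prop :=
  [/\ inFbarM h, FleM h f, FleM h g &
      forall k, inFbarM k -> FleM k f -> FleM k g -> FleM k h].

Definition inFM (f : rmap M) : Prop :=
  inFbarM f /\
  forall g, inFbarM g ->
    (is_joinM f g plus_infM -> g = plus_infM) /\
    (is_meetM f g minus_infM -> g = minus_infM).

Lemma inC_inFbarM (f : rmap M) : inC f -> inFbarM f.
Proof.
case=> Hf join_top _ _; split => // r s rs; split; apply: pc_le_of_join_top.
  exact: join_top.
by rewrite joinC; apply: join_top.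
Qed.

Lemma inFbarM_pcpc_hi (f : rmap M) t s : inFbarM f -> t < s ->
  le (pc (pc (hi f t))) (hi f s).
Proof.
move=> [Hf pcf] ts; have [tu us] : t <= (t + s) / 2 /\ (t + s) / 2 < s by split; lra.
apply: fle_trans (pcf _ _ us).1.
by rewrite -(pc3 (lo f _)); do 2 apply: pc_anti; apply: hom_hi_pc.
Qed.

Lemma inFbarM_join_top (f : rmap M) r s : extremally_disconnected M ->
  inFbarM f -> r < s -> join (lo f r) (hi f s) = top M.
Proof.
move=> ED Ff rs; have [ru us] : r < (r + s) / 2 /\ (r + s) / 2 < s by split; lra.
apply: top_le_eq; rewrite -(ED (hi f ((r + s) / 2))); apply: join_mono.
  exact: (Ff.2 _ _ ru).2.
exact: inFbarM_pcpc_hi.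
Qed.

Definition rmap_of_hi (m : rat -> M) : rmap M :=
  RMap (fun r => sup (fun y => exists t, r < t /\ y = pc (m t))) m.

Lemma rmap_of_hi_inFbarM (m : rat -> M) :
  (forall s, m s = sup (fun y => exists r, r < s /\ y = m r)) ->
  (forall t s, t < s -> le (pc (pc (m t))) (m s)) ->
  inFbarM (rmap_of_hi m).
Proof.
move=> mE m_pcpc; have m_mono := sup_lt_mono mE.
have pc_le_lo r t : r < t -> le (pc (m t)) (lo (rmap_of_hi m) r).
  by move=> rt; apply: le_sup_gt rt (fle_refl _).
split; first split => /=.
- move=> r s sr; apply: le_bot_eq; rewrite meetC; apply: meet_sup_le => _ [t [rt ->]].
  apply: fle_trans (meet_pc (m t)); apply: meet_mono (fle_refl _).
  by apply: m_mono; apply: le_trans sr (ltW rt).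
- move=> r; apply: sup_gt_eq.
    move=> s rs; apply: sup_lub => _ [t [st ->]]; apply: pc_le_lo; exact: lt_trans st.
  apply: sup_lub => _ [t [rt ->]]; have [ru ut] : r < (r + t) / 2 /\ (r + t) / 2 < t by split; lra.
  by apply: le_sup_gt ru _; apply: pc_le_lo.
- exact: mE.
- move=> r s rs; split; last exact: pc_le_lo.
  have [ru us] : r < (r + s) / 2 /\ (r + s) / 2 < s by split; lra.
  by apply: fle_trans (m_pcpc _ _ us); apply: pc_anti; apply: pc_le_lo.
Qed.

Lemma rmap_of_hi_ge (f : rmap M) (m : rat -> M) : is_hom f ->
  (forall s, le (m s) (hi f s)) -> FleM f (rmap_of_hi m).
Proof.
move=> Hf m_le; split => [r|s] //=; case: (Hf) => _ lE _.
rewrite (lE r); apply: sup_lub => _ [t [rt ->]]; apply: le_sup_gt rt _.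
by apply: fle_trans (hom_lo_pc Hf (lexx t)) _; apply: pc_anti.
Qed.

Lemma hi_meet_sup_lt (f g : rmap M) s : is_hom f -> is_hom g ->
  meet (hi f s) (hi g s) = sup (fun y => exists r, r < s /\ y = meet (hi f r) (hi g r)).
Proof.
move=> Hf Hg; apply: sup_lt_eq.
  by move=> r /ltW rs; apply: meet_mono; apply: hi_mono.
case: (Hf) => _ _ fE; case: (Hg) => _ _ gE.
rewrite {1}(fE s) meetC; apply: meet_sup_le => _ [r1 [r1s ->]].
rewrite {1}(gE s) meetC; apply: meet_sup_le => _ [r2 [r2s ->]].
apply: le_sup_lt (_ : Order.max r1 r2 < s) _; first by rewrite gt_max r1s r2s.
by apply: meet_mono; apply: hi_mono; rewrite // ?le_max lexx ?orbT.
Qed.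

Lemma inFbarM_hi_meet_pcpc (f g : rmap M) t s : inFbarM f -> inFbarM g -> t < s ->
  le (pc (pc (meet (hi f t) (hi g t)))) (meet (hi f s) (hi g s)).
Proof.
move=> Ff Fg ts; apply: meet_glb.
  by apply: fle_trans (inFbarM_pcpc_hi Ff ts); do 2 apply: pc_anti; apply: meet_l.
by apply: fle_trans (inFbarM_pcpc_hi Fg ts); do 2 apply: pc_anti; apply: meet_r.
Qed.

Lemma inFbarM_hi_bot (g : rmap M) : inFbarM g -> (forall s, hi g s = bot M) -> g = plus_infM.
Proof.
case: g => l h [_ pcg] /= h0.
have l1 r : l r = top M.
  apply: top_le_eq; rewrite -pc_bot -(h0 (r + 1)); apply: (pcg r (r + 1) _).2; lra.
by congr RMap; apply: functional_extensionality.
Qed.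

Lemma is_joinM_plus_inf (f g : rmap M) : inFbarM f -> dense (sup_hi f) ->
  inFbarM g -> is_joinM f g plus_infM -> g = plus_infM.
Proof.
move=> Ff Df Fg [_ _ _ lub].
pose m s := meet (hi f s) (hi g s).
have Fm : inFbarM (rmap_of_hi m).
  apply: rmap_of_hi_inFbarM => [s|t s ts]; first exact: hi_meet_sup_lt Ff.1 Fg.1.
  exact: inFbarM_hi_meet_pcpc.
have [_ /= m0] := lub _ Fm (rmap_of_hi_ge Ff.1 (fun s => meet_l _ _))
                           (rmap_of_hi_ge Fg.1 (fun s => meet_r _ _)).
apply: inFbarM_hi_bot => // s; apply: le_bot_eq; apply: Df.
apply: meet_sup_le => _ [t ->]; apply: fle_trans (m0 (Order.max s t)).
rewrite /m meetC; apply: meet_mono; [apply: hi_mono Ff.1 _ | apply: hi_mono Fg.1 _];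
  by rewrite le_max lexx ?orbT.
Qed.

Definition rneg (f : rmap M) : rmap M :=
  RMap (fun r => hi f (- r)) (fun s => lo f (- s)).

Lemma rnegK (f : rmap M) : rneg (rneg f) = f.
Proof. by case: f => l h; congr RMap; apply: functional_extensionality => x; rewrite /= opprK. Qed.

Lemma rneg_hom (f : rmap M) : is_hom f -> is_hom (rneg f).
Proof.
case=> disj lE hE; split => /= [r s sr | r | s].
- by rewrite meetC disj // lerN2.
- rewrite (hE (- r)); apply: sup_ext => y.
  by split=> -[t [tr ->]]; exists (- t); rewrite ?opprK; split => //; lra.
- rewrite (lE (- s)); apply: sup_ext => y.
  by split=> -[t [tr ->]]; exists (- t); rewrite ?opprK; split => //; lra.
Qed.

Lemma rneg_inFbarM (f : rmap M) : inFbarM f -> inFbarM (rneg f).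
Proof.
case=> Hf pcf; split; first exact: rneg_hom.
by move=> r s rs /=; have /pcf [] : - s < - r by rewrite ltrN2.
Qed.

Lemma rneg_FleM (f g : rmap M) : FleM f g -> FleM (rneg g) (rneg f).
Proof. by case=> lo_le hi_le; split => x /=. Qed.

Lemma sup_hi_rneg (f : rmap M) : sup_hi (rneg f) = sup_lo f.
Proof.
apply: sup_ext => y; split => -[x ->] /=; first by exists (- x).
by exists (- x); rewrite opprK.
Qed.

Lemma sup_lo_rneg (f : rmap M) : sup_lo (rneg f) = sup_hi f.
Proof. by rewrite -sup_hi_rneg rnegK. Qed.

Lemma rneg_inC (f : rmap M) : inC f -> inC (rneg f).
Proof.
case=> Hf join_top lo_top hi_top; split.
- exact: rneg_hom.
- by move=> r s rs /=; rewrite joinC join_top // ltrN2.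
- by rewrite [sup _]sup_lo_rneg.
- by rewrite [sup _]sup_hi_rneg.
Qed.

Lemma rneg_is_meetM (f g h : rmap M) :
  is_meetM f g h -> is_joinM (rneg f) (rneg g) (rneg h).
Proof.
case=> Fh hf hg glb; split; [exact: rneg_inFbarM | exact: rneg_FleM | exact: rneg_FleM |].
move=> k Fk fk gk; rewrite -(rnegK k); apply: rneg_FleM; apply: glb.
- exact: rneg_inFbarM.
- by rewrite -(rnegK f); apply: rneg_FleM.
- by rewrite -(rnegK g); apply: rneg_FleM.
Qed.

Lemma rneg_is_joinM (f g h : rmap M) :
  is_joinM f g h -> is_meetM (rneg f) (rneg g) (rneg h).
Proof.
case=> Fh fh gh lub; split; [exact: rneg_inFbarM | exact: rneg_FleM | exact: rneg_FleM |].
move=> k Fk kf kg; rewrite -(rnegK k); apply: rneg_FleM; apply: lub.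
- exact: rneg_inFbarM.
- by rewrite -(rnegK f); apply: rneg_FleM.
- by rewrite -(rnegK g); apply: rneg_FleM.
Qed.

Lemma rneg_inFM (f : rmap M) : inFM f -> inFM (rneg f).
Proof.
case=> Ff Fmax; split; first exact: rneg_inFbarM.
move=> g Fg; have [join_top meet_bot] := Fmax _ (rneg_inFbarM Fg).
split.
- by move/rneg_is_joinM; rewrite rnegK => /meet_bot E; rewrite -(rnegK g) E.
- by move/rneg_is_meetM; rewrite rnegK => /join_top E; rewrite -(rnegK g) E.
Qed.

Lemma inFM_of_dense (f : rmap M) :
  inFbarM f -> dense (sup_hi f) -> dense (sup_lo f) -> inFM f.
Proof.
move=> Ff Dhi Dlo; split => // g Fg; split; first exact: is_joinM_plus_inf.
move/rneg_is_meetM => fg.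
have E : rneg g = plus_infM.
  by apply: is_joinM_plus_inf fg; rewrite ?sup_hi_rneg //; apply: rneg_inFbarM.
by rewrite -(rnegK g) E.
Qed.

Lemma inC_inFM (f : rmap M) : inC f -> inFM f.
Proof.
move=> Cf; apply: inFM_of_dense; first exact: inC_inFbarM.
- by case: Cf => _ _ _ hi_top; rewrite /sup_hi hi_top; apply: dense_top.
- by case: Cf => _ _ lo_top _; rewrite /sup_lo lo_top; apply: dense_top.
Qed.

(** * If F(M) = C(M), then M is an extremally disconnected P-frame *)

Ltac case_ifs :=
  repeat (case: ifP => ?);
  repeat match goal with
  | H : (_ < _) = false |- _ => move/negbT: H; rewrite -leNgt => H
  | H : (_ <= _) = false |- _ => move/negbT: H; rewrite -ltNge => H
  end.

Ltac frame_done :=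
  rewrite ?pc_top ?pc_bot ?pc3;
  solve [ apply: fle_refl | apply: le_top | apply: bot_le | apply: meet_l | apply: meet_r
        | apply: join_l | apply: join_r | apply: meet_pc | rewrite meetC; apply: meet_pc
        | exfalso; lra ].

(** Equal to [1] on [pc (pc a)] and to [0] on [pc a]. *)
Definition pc_step (a : M) : rmap M :=
  RMap (fun r => if r < 0 then top M else if r < 1 then pc (pc a) else bot M)
       (fun s => if s <= 0 then bot M else if s <= 1 then pc a else top M).

Lemma pc_step_inFbarM (a : M) : inFbarM (pc_step a).
Proof.
split; first split => /=.
- by move=> r s sr; apply: le_bot_eq; case_ifs; frame_done.
- move=> r; apply: sup_gt_eq => [s rs | ]; first by case_ifs; frame_done.
  case: (ltP r 0) => r0; first by apply: (le_sup_gt (s := r / 2)); [lra | case_ifs; frame_done].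
  case: (ltP r 1) => r1; last by case_ifs; frame_done.
  by apply: (le_sup_gt (s := (r + 1) / 2)); [lra | case_ifs; frame_done].
- move=> s; apply: sup_lt_eq => [r rs | ]; first by case_ifs; frame_done.
  case: (leP s 0) => s0; first by case_ifs; frame_done.
  case: (leP s 1) => s1; first by apply: (le_sup_lt (r := s / 2)); [lra | case_ifs; frame_done].
  by apply: (le_sup_lt (r := (s + 1) / 2)); [lra | case_ifs; frame_done].
- by move=> r s rs /=; split; case_ifs; frame_done.
Qed.

Lemma pc_step_inFM (a : M) : inFM (pc_step a).
Proof.
apply: inFM_of_dense; first exact: pc_step_inFbarM.
- by apply: dense_sup; exists 2.
- by apply: dense_sup; exists (-1).
Qed.

Lemma ED_of_F_sub_C : (forall f : rmap M, inFM f -> inC f) -> extremally_disconnected M.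
Proof.
move=> F_C a; have [_ join_top _ _] := F_C _ (pc_step_inFM a).
by have := join_top 0 1 ltr01; rewrite /=; case_ifs; rewrite joinC.
Qed.

(** [1 / f] on [pc (pc (lo f 0))] and [0] on [pc (lo f 0)]. *)
Definition recip (f : rmap M) : rmap M :=
  RMap (fun r => if r < 0 then top M else if r <= 0 then pc (pc (lo f 0))
                 else meet (pc (pc (lo f 0))) (hi f r^-1))
       (fun s => if s <= 0 then bot M else join (lo f s^-1) (pc (lo f 0))).

Section Recip.
Variable f : rmap M.
Hypothesis Cf : inC f.

Let Hf : is_hom f. Proof. by case: Cf. Qed.

Lemma recip_disj r s : s <= r -> meet (lo (recip f) r) (hi (recip f) s) = bot M.
Proof.
move=> sr; apply: le_bot_eq => /=; case_ifs; try frame_done; apply: meet_join_le.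
- have rs' : r^-1 <= s^-1 by apply: leV_pos; lra.
  apply: fle_trans (hom_lo_hi_disj Hf rs').
  by rewrite meetC; apply: meet_mono (fle_refl _) (meet_r _ _).
- apply: fle_trans (meet_pc (pc (lo f 0))).
  by rewrite meetC; apply: meet_mono (fle_refl _) (meet_l _ _).
Qed.

Lemma recip_lo_sup r :
  lo (recip f) r = sup (fun y => exists s, r < s /\ y = lo (recip f) s).
Proof.
have lo_ge t u : 0 < u -> t <= u^-1 ->
    le (meet (pc (pc (lo f 0))) (hi f t)) (lo (recip f) u).
  by move=> u0 tu /=; case_ifs; try lra; apply: meet_mono (fle_refl _) (hi_mono Hf tu).
apply: sup_gt_eq => [s rs | ].
  rewrite /=; case_ifs; try frame_done; apply: meet_mono (fle_refl _) (hi_mono Hf _).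
  by apply: leV_pos; lra.
rewrite [lo (recip f) r]/=; case_ifs.
- by apply: (le_sup_gt (s := r / 2)); [lra | rewrite /=; case_ifs; frame_done].
- have -> : r = 0 by lra.
  have hi_top : sup_hi f = top M by case: Cf.
  apply: fle_trans (_ : le _ (meet (pc (pc (lo f 0))) (sup_hi f))) _.
    by rewrite hi_top meet_topr; apply: fle_refl.
  apply: meet_sup_le => _ [t ->].
  case: (leP t 1) => t1; first by apply: le_sup_gt ltr01 _; apply: lo_ge; rewrite ?invr1.
  apply: (le_sup_gt (s := t^-1)); first by rewrite invr_gt0; lra.
  by apply: lo_ge; rewrite ?invrK // invr_gt0; lra.
- have r'0 : 0 < r^-1 by rewrite invr_gt0; lra.
  case: (Hf) => _ _ hE; rewrite (hE r^-1); apply: meet_sup_le => _ [t [tr ->]].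
  pose w := if t <= 0 then r^-1 / 2 else (t + r^-1) / 2.
  have [w0 wr tw] : [/\ 0 < w, w < r^-1 & t <= w] by rewrite /w; case_ifs; split; lra.
  apply: (le_sup_gt (s := w^-1)); last by apply: lo_ge; rewrite ?invrK // invr_gt0.
  by rewrite -[r]invrK; apply: ltV_pos; rewrite ?invr_gt0.
Qed.

Lemma recip_hi_sup s :
  hi (recip f) s = sup (fun y => exists r, r < s /\ y = hi (recip f) r).
Proof.
apply: sup_lt_eq => [r rs | ].
  rewrite /=; case_ifs; try frame_done; apply: join_mono (fle_refl _).
  by apply: lo_anti Hf _; apply: leV_pos; lra.
rewrite [hi (recip f) s]/=; case_ifs; first exact: bot_le.
apply: join_lub.
- case: (Hf) => _ lE _; rewrite (lE s^-1); apply: sup_lub => _ [t [st ->]].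
  have t0 : 0 < t by apply: lt_trans st; rewrite invr_gt0.
  have t'0 : 0 < t^-1 by rewrite invr_gt0.
  apply: (le_sup_lt (r := t^-1)); first by rewrite -[s]invrK ltV_pos ?invr_gt0.
  by rewrite /=; case_ifs; [lra | rewrite invrK; apply: join_l].
- apply: (le_sup_lt (r := s / 2)); first lra.
  by rewrite /=; case_ifs; [lra | apply: join_r].
Qed.

Lemma recip_pc r s : r < s ->
  le (pc (lo (recip f) r)) (hi (recip f) s) /\ le (pc (hi (recip f) s)) (lo (recip f) r).
Proof.
move=> rs /=; have pcf := (inC_inFbarM Cf).2.
split; case_ifs; try frame_done.
- have sr' : s^-1 < r^-1 by apply: ltV_pos; lra.
  set X := pc (meet (pc (pc (lo f 0))) (hi f r^-1)).
  apply: fle_trans (_ : le _ (meet X (join (lo f s^-1) (hi f r^-1)))) _.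
    by case: Cf => _ join_top _ _; rewrite join_top // meet_topr; apply: fle_refl.
  apply: meet_join_le; first by apply: fle_trans (meet_r _ _) (join_l _ _).
  apply: fle_trans (join_r _ _); apply: le_pc.
  apply: fle_trans (meet_pc (meet (pc (pc (lo f 0))) (hi f r^-1))); apply: meet_glb.
  + apply: meet_glb; first by apply: fle_trans (meet_l _ _) (le_pcpc _).
    by apply: fle_trans (meet_r _ _) (meet_r _ _).
  + by apply: fle_trans (meet_r _ _) (meet_l _ _).
- by apply: pc_anti; apply: join_r.
- apply: meet_glb; first by apply: pc_anti; apply: join_r.
  have sr' : s^-1 < r^-1 by apply: ltV_pos; lra.
  by apply: fle_trans _ (pcf _ _ sr').1; apply: pc_anti; apply: join_l.
Qed.

Lemma recip_inFbarM : inFbarM (recip f).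
Proof.
split; last exact: recip_pc.
by split; [apply: recip_disj | apply: recip_lo_sup | apply: recip_hi_sup].
Qed.

Lemma sup_hi_recip : sup_hi (recip f) = join (lo f 0) (pc (lo f 0)).
Proof.
apply: fle_anti.
  apply: sup_lub => _ [s ->] /=; case_ifs; first exact: bot_le.
  by apply: join_mono (fle_refl _); apply: lo_anti Hf _; rewrite invr_ge0; lra.
apply: join_lub.
- case: (Hf) => _ lE _; rewrite (lE 0); apply: sup_lub => _ [t [t0 ->]].
  have t'0 : 0 < t^-1 by rewrite invr_gt0.
  apply: fle_trans (sup_ub (ex_intro _ t^-1 erefl)).
  by rewrite /=; case_ifs; [lra | rewrite invrK; apply: join_l].
- apply: fle_trans (sup_ub (ex_intro _ 1 erefl)).
  by rewrite /=; case_ifs; try lra; apply: join_r.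
Qed.

Lemma recip_inFM : inFM (recip f).
Proof.
apply: inFM_of_dense; first exact: recip_inFbarM.
- by rewrite sup_hi_recip; apply: dense_join_pc.
- by apply: dense_sup; exists (-1).
Qed.

End Recip.

Lemma lo0_complemented (f : rmap M) : (forall g : rmap M, inFM g -> inC g) ->
  inC f -> complemented (lo f 0).
Proof.
move=> F_C Cf; exists (pc (lo f 0)); split; first exact: le_bot_eq (meet_pc _).
by have [_ _ _ <-] := F_C _ (recip_inFM Cf); rewrite -[sup _]/(sup_hi _) sup_hi_recip.
Qed.

Lemma P_of_F_sub_C : (forall f : rmap M, inFM f -> inC f) -> P_frame M.
Proof.
move=> F_C _ [f [Cf ->]].
have hi0 : complemented (hi f 0) by have := lo0_complemented F_C (rneg_inC Cf); rewrite /= oppr0.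
apply: complemented_join hi0 (lo0_complemented F_C Cf).
by case: Cf => -[disj _ _] _ _ _; rewrite meetC disj //; apply: fle_refl.
Qed.

(** * In an extremally disconnected P-frame, F(M) = C(M) *)

Lemma plus_infM_inFbarM : inFbarM plus_infM.
Proof.
split; first split => /=.
- by move=> r s _; apply: le_bot_eq; apply: meet_r.
- move=> r; apply: sup_gt_eq => [s _ | ]; first exact: fle_refl.
  by apply: (le_sup_gt (s := r + 1)); [lra | apply: fle_refl].
- by move=> s; apply: sup_lt_eq => [r _ | ]; apply: bot_le.
- by move=> r s _ /=; rewrite pc_top pc_bot; split; [apply: fle_refl | apply: le_top].
Qed.

Lemma sup_hi_dense_of_inFM (f : rmap M) :
  extremally_disconnected M -> inFM f -> dense (sup_hi f).
Proof.
move=> ED [[_ pcf] Fmax]; set a := sup_hi f.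
pose g := rmap_of_hi (fun _ => pc a).
have Fg : inFbarM g.
  apply: rmap_of_hi_inFbarM => [s | t s _]; last by rewrite pc3; apply: fle_refl.
  symmetry; apply: sup_eq => [|y [r [_ ->]]]; last exact: fle_refl.
  by exists (s - 1); split => //; lra.
have fg : is_joinM f g plus_infM.
  split; [exact: plus_infM_inFbarM | by split => x; [apply: le_top | apply: bot_le] |
          by split => x; [apply: le_top | apply: bot_le] |].
  move=> k Fk [fk_lo fk_hi] [gk_lo gk_hi]; split => x /=.
  - rewrite -(ED a); apply: join_lub.
      apply: fle_trans (fk_lo x); apply: fle_trans (pcf x (x + 1) _).2; last lra.
      by apply: pc_anti; apply: sup_ub; exists (x + 1).
    by apply: fle_trans (gk_lo x); apply: (le_sup_gt (s := x + 1)); [lra | apply: fle_refl].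
  - apply: fle_trans (meet_pc a); apply: meet_glb; last exact: gk_hi.
    by apply: fle_trans (fk_hi x) _; apply: sup_ub; exists x.
have pca0 : pc a = bot M by have := (Fmax g Fg).1 fg; move/(f_equal (fun h => hi h 0)).
by move=> y ya0; rewrite -pca0; apply: le_pc; rewrite meetC.
Qed.

(** [1 / (1 + max f 0)]. *)
Definition recip_succ_pos (f : rmap M) : rmap M :=
  RMap (fun r => if r < 0 then top M else if r <= 0 then sup_hi f
                 else if r < 1 then hi f (r^-1 - 1) else bot M)
       (fun s => if s <= 0 then bot M else if s <= 1 then lo f (s^-1 - 1) else top M).

Section RecipSuccPos.
Variable f : rmap M.
Hypothesis Hf : is_hom f.
Hypothesis f_join_top : forall r s, r < s -> join (lo f r) (hi f s) = top M.

Local Notation g := (recip_succ_pos f).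

Lemma recip_succ_pos_disj r s : s <= r -> meet (lo g r) (hi g s) = bot M.
Proof.
move=> sr; apply: le_bot_eq => /=; case_ifs; try frame_done.
have [s0 r0] : 0 < s /\ 0 < r by split; lra.
by rewrite meetC; apply: hom_lo_hi_disj => //; have := leV_pos s0 r0 sr; lra.
Qed.

Lemma recip_succ_pos_lo_sup r : lo g r = sup (fun y => exists s, r < s /\ y = lo g s).
Proof.
have lo_ge t u : 1 < u -> t <= u - 1 -> le (hi f t) (lo g u^-1).
  move=> u1 tu; have u'0 : 0 < u^-1 by rewrite invr_gt0; lra.
  have u'1 : u^-1 < 1 by rewrite invf_lt1; lra.
  by rewrite /=; case_ifs; try lra; rewrite invrK; apply: hi_mono.
apply: sup_gt_eq => [s rs | ].
  rewrite /=; case_ifs; try frame_done; first by apply: sup_ub; eexists.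
  have [r0 s0] : 0 < r /\ 0 < s by split; lra.
  by apply: hi_mono => //; have := leV_pos r0 s0 (ltW rs); lra.
rewrite [lo g r]/=; case_ifs; try frame_done.
- by apply: (le_sup_gt (s := r / 2)); [lra | rewrite /=; case_ifs; frame_done].
- apply: sup_lub => _ [t ->]; pose u := if t <= 0 then 2 else t + 2.
  have [u1 tu] : 1 < u /\ t <= u - 1 by rewrite /u; case_ifs; split; lra.
  have u'0 : 0 < u^-1 by rewrite invr_gt0; lra.
  by apply: (le_sup_gt (s := u^-1)); [lra | apply: lo_ge].
- have r'1 : 1 < r^-1 by rewrite invf_gt1; lra.
  case: (Hf) => _ _ hE; rewrite (hE (r^-1 - 1)); apply: sup_lub => _ [t [tr ->]].
  pose u := if t <= 0 then (1 + r^-1) / 2 else (t + 1 + r^-1) / 2.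
  have [u1 ur tu] : [/\ 1 < u, u < r^-1 & t <= u - 1] by rewrite /u; case_ifs; split; lra.
  apply: (le_sup_gt (s := u^-1)); last exact: lo_ge.
  by rewrite -[r]invrK; apply: ltV_pos => //; lra.
Qed.

Lemma recip_succ_pos_hi_sup s : hi g s = sup (fun y => exists r, r < s /\ y = hi g r).
Proof.
apply: sup_lt_eq => [r rs | ].
  rewrite /=; case_ifs; try frame_done.
  have [r0 s0] : 0 < r /\ 0 < s by split; lra.
  by apply: lo_anti => //; have := leV_pos r0 s0 (ltW rs); lra.
rewrite [hi g s]/=; case_ifs; try frame_done.
- case: (Hf) => _ lE _; rewrite (lE (s^-1 - 1)); apply: sup_lub => _ [t [st ->]].
  have s'1 : 1 <= s^-1 by rewrite invf_ge1; lra.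
  have t'0 : 0 < (t + 1)^-1 by rewrite invr_gt0; lra.
  have t'1 : (t + 1)^-1 < 1 by rewrite invf_lt1; lra.
  apply: (le_sup_lt (r := (t + 1)^-1)).
    by rewrite -[s]invrK; apply: ltV_pos; lra.
  by rewrite /=; case_ifs; try lra; rewrite invrK addrK; apply: fle_refl.
- by apply: (le_sup_lt (r := (1 + s) / 2)); [lra | rewrite /=; case_ifs; frame_done].
Qed.

Lemma recip_succ_pos_join_top r s : r < s -> join (lo g r) (hi g s) = top M.
Proof.
move=> rs; apply: top_le_eq => /=; case_ifs; try frame_done.
- have s'1 : s^-1 - 1 < s^-1 by lra.
  rewrite -(f_join_top s'1); apply: join_lub; first exact: join_r.
  by apply: fle_trans (join_l _ (lo f (s^-1 - 1))); apply: sup_ub; eexists.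
- have [r0 s0] : 0 < r /\ 0 < s by split; lra.
  by rewrite joinC f_join_top; [apply: fle_refl | have := ltV_pos r0 s0 rs; lra].
Qed.

Lemma recip_succ_pos_inC : inC g.
Proof.
split.
- split; [exact: recip_succ_pos_disj | exact: recip_succ_pos_lo_sup | exact: recip_succ_pos_hi_sup].
- exact: recip_succ_pos_join_top.
- by apply: sup_eq => [|y _]; [exists (-1) | apply: le_top].
- by apply: sup_eq => [|y _]; [exists 2 | apply: le_top].
Qed.

Lemma sup_hi_cozero : cozero (sup_hi f).
Proof.
exists g; split; first exact: recip_succ_pos_inC.
by rewrite /=; case_ifs; apply: fle_anti; [apply: join_r | apply: join_lub (bot_le _) (fle_refl _)].
Qed.

End RecipSuccPos.

Lemma sup_hi_top_of_inFM (f : rmap M) : extremally_disconnected M -> P_frame M ->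
  inFM f -> sup_hi f = top M.
Proof.
move=> ED PF Ff; have [[Hf _] _] := Ff.
have [b [ab0 ab1]] := PF _ (sup_hi_cozero Hf (fun r s => inFbarM_join_top ED Ff.1)).
have b0 : le b (bot M).
  by apply: (sup_hi_dense_of_inFM ED Ff); rewrite meetC ab0; apply: fle_refl.
by rewrite -ab1 (le_bot_eq b0); apply: fle_anti (join_l _ _) (join_lub (fle_refl _) (bot_le _)).
Qed.

Lemma inFM_inC (f : rmap M) : extremally_disconnected M -> P_frame M -> inFM f -> inC f.
Proof.
move=> ED PF Ff; split; first exact: Ff.1.1.
- by move=> r s; apply: inFbarM_join_top ED Ff.1.
- by move: (sup_hi_top_of_inFM ED PF (rneg_inFM Ff)); rewrite sup_hi_rneg.
- exact: sup_hi_top_of_inFM.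
Qed.

(** * The frame of sublocales *)

Lemma eq_of_le_iff (a b : M) : (forall z, le z a <-> le z b) -> a = b.
Proof. by move=> ab; apply: fle_anti; [apply/ab | apply/ab]; apply: fle_refl. Qed.

Lemma le_imp (z y x : M) : le z (imp y x) <-> le (meet z y) x.
Proof.
split=> [z_imp | zyx]; last exact: sup_ub.
apply: fle_trans (meet_mono z_imp (fle_refl y)) _.
by rewrite meetC; apply: meet_sup_le => p; rewrite meetC.
Qed.

Lemma imp_meet (y s t : M) : imp y (meet s t) = meet (imp y s) (imp y t).
Proof.
apply: eq_of_le_iff => z; rewrite le_imp; split => [zyst | zst].
- by apply: meet_glb; apply/le_imp; apply: fle_trans zyst _; [apply: meet_l | apply: meet_r].
- by apply: meet_glb; apply/le_imp; apply: fle_trans zst _; [apply: meet_l | apply: meet_r].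
Qed.

Lemma imp_meet_l (y s t : M) : le y s -> imp y (meet s t) = imp y t.
Proof.
move=> ys; apply: eq_of_le_iff => z; rewrite !le_imp; split => [zyst | zyt].
  by apply: fle_trans zyst (meet_r _ _).
by apply: meet_glb => //; apply: fle_trans (meet_r _ _) ys.
Qed.

Lemma meet_imp (x y : M) : le x y -> meet y (imp y x) = x.
Proof.
move=> xy; apply: fle_anti; first by rewrite meetC; apply/le_imp; apply: fle_refl.
by apply: meet_glb => //; apply/le_imp; apply: meet_l.
Qed.

Section Sublocale.
Variable S : M -> Prop.
Hypothesis HS : sublocale S.

Lemma sublocale_inf (A : M -> Prop) : (forall a, A a -> S a) -> S (inf A).
Proof. exact: HS.1. Qed.

Lemma sublocale_imp x s : S s -> S (imp x s).
Proof. exact: HS.2. Qed.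

Lemma sublocale_meet a b : S a -> S b -> S (meet a b).
Proof. by move=> Sa Sb; apply: sublocale_inf => y [->|->]. Qed.

Lemma sublocale_top : S (top M).
Proof.
have -> : top M = inf (fun _ => False) by apply: fle_anti (le_top _); apply: inf_glb.
by apply: sublocale_inf.
Qed.

Definition sl_hull (x : M) : M := inf (fun s => S s /\ le x s).

Lemma sl_hull_in x : S (sl_hull x).
Proof. by apply: sublocale_inf => a []. Qed.

Lemma le_sl_hull x : le x (sl_hull x).
Proof. by apply: inf_glb => y []. Qed.

Lemma sl_hull_le x s : S s -> le x s -> le (sl_hull x) s.
Proof. by move=> Ss xs; apply: inf_lb. Qed.

End Sublocale.

Definition sl_meet_set (A B : M -> Prop) : M -> Prop :=
  fun x => exists s t, A s /\ B t /\ x = meet s t.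

Definition sl_join_set (P : coS M -> Prop) : M -> Prop :=
  fun x => forall S : coS M, P S -> proj1_sig S x.

Lemma sl_meet_setP (A B : M -> Prop) x : sublocale A -> sublocale B ->
  sl_meet_set A B x <-> B (imp (sl_hull A x) x).
Proof.
move=> HA HB; split.
- move=> [s [t [As [Bt ->]]]]; rewrite imp_meet_l; first exact: sublocale_imp.
  by apply: sl_hull_le => //; apply: meet_l.
- move=> Bx; exists (sl_hull A x), (imp (sl_hull A x) x).
  split; first exact: sl_hull_in.
  by split => //; rewrite meet_imp //; apply: le_sl_hull.
Qed.

Lemma sl_meet_set_sublocale (A B : M -> Prop) : sublocale A -> sublocale B ->
  sublocale (sl_meet_set A B).
Proof.
move=> HA HB; split.
- move=> X XAB; exists (inf (fun y => exists x, X x /\ y = sl_hull A x)),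
                       (inf (fun y => exists x, X x /\ y = imp (sl_hull A x) x)).
  split; first by apply: sublocale_inf => // _ [x [_ ->]]; apply: sl_hull_in.
  split; first by apply: sublocale_inf => // _ [x [Xx ->]]; apply/sl_meet_setP => //; apply: XAB.
  apply: fle_anti.
  + apply: meet_glb; apply: inf_glb => _ [x [Xx ->]].
      by apply: fle_trans (le_sl_hull A x); apply: inf_lb.
    by apply/le_imp; apply: fle_trans (meet_l _ _) _; apply: inf_lb.
  + apply: inf_glb => x Xx; rewrite -(meet_imp (le_sl_hull A x)).
    by apply: meet_mono; apply: inf_lb; exists x.
- move=> y _ [s [t [As [Bt ->]]]]; rewrite imp_meet.
  by exists (imp y s), (imp y t); split; [|split]; try apply: sublocale_imp.
Qed.

Lemma sl_join_set_sublocale (P : coS M -> Prop) : sublocale (sl_join_set P).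
Proof.
split=> [X XP S PS | x s Ps S PS].
  by apply: sublocale_inf; [exact: (proj2_sig S) | move=> a /XP; apply].
by apply: sublocale_imp; [exact: (proj2_sig S) | apply: Ps].
Qed.

Lemma coS_anti (A B : coS M) : le A B -> le B A -> A = B.
Proof.
case: A B => [A HA] [B HB] /= BA AB.
have AB_eq : A = B.
  apply: functional_extensionality => x; apply: propositional_extensionality.
  by split; [apply: AB | apply: BA].
by subst B; congr exist; apply: proof_irrelevance.
Qed.

Lemma coS_is_sup (P : coS M -> Prop) :
  is_sup P (exist _ (sl_join_set P) (sl_join_set_sublocale P)).
Proof. by split => [S PS x /= Px | Z Zub x /= Zx S PS]; [apply: Px | apply: Zub]. Qed.

Lemma coS_supE (P : coS M -> Prop) x : proj1_sig (sup P) x <-> sl_join_set P x.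
Proof. by rewrite (sup_of_is_sup coS_anti (coS_is_sup P)). Qed.

Lemma coS_meetE (A B : coS M) x :
  proj1_sig (meet A B) x <-> sl_meet_set (proj1_sig A) (proj1_sig B) x.
Proof.
have HAB := sl_meet_set_sublocale (proj2_sig A) (proj2_sig B).
suff -> : meet A B = exist _ _ HAB by [].
apply: inf_of_is_inf coS_anti _; split.
- move=> _ [->|->] y /= Ay.
    exists y, (top M); rewrite meet_topr; split => //; split => //.
    by apply: sublocale_top; exact: (proj2_sig B).
  exists (top M), y; rewrite meet_topl; split => //.
  by apply: sublocale_top; exact: (proj2_sig A).
- move=> Z ZAB y /= [s [t [As [Bt ->]]]]; apply: sublocale_meet; first exact: (proj2_sig Z).
  + exact: (ZAB A (or_introl erefl)).
  + exact: (ZAB B (or_intror erefl)).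
Qed.

Lemma coS_frame : is_frame (coS M).
Proof.
split.
- by move=> A x.
- by move=> A B C BA CB x /CB /BA.
- exact: coS_anti.
- by move=> P; eexists; apply: coS_is_sup.
- move=> A P; apply: coS_anti => x.
  + move/coS_supE => Px; apply/coS_meetE.
    have HA : sublocale (proj1_sig A) := proj2_sig A.
    have HP : sublocale (proj1_sig (sup P)) := proj2_sig (sup P).
    apply/(sl_meet_setP _ HA HP)/coS_supE => S PS.
    have HS : sublocale (proj1_sig S) := proj2_sig S.
    by have /coS_meetE/(sl_meet_setP _ HA HS) := Px _ (ex_intro _ S (conj PS erefl)).
  + move/coS_meetE => -[s [t [As [Pt ->]]]]; apply/coS_supE => _ [S [PS ->]].
    by apply/coS_meetE; exists s, t; split => //; split => //; move/coS_supE: Pt; apply.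
Qed.

End Frame.

Theorem proposition6p3 (L : poset) (HL : is_frame L) :
  (forall f : rmap (coS L), inF f <-> inC f) <->
  (extremally_disconnected (coS L) /\ P_frame (coS L)).
Proof.
have HM := coS_frame HL.
split => [F_iff_C | [ED PF] f].
- have F_C (f : rmap (coS L)) : inFM f -> inC f by move/F_iff_C.
  by split; [apply: ED_of_F_sub_C HM F_C | apply: P_of_F_sub_C HM F_C].
- by split; [apply: (@inFM_inC _ HM f ED PF) | apply: inC_inFM].
Qed.
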